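(* Let $r$ and $k$ be integers with $1 \le k \le r$. There exists $n_0 = n_0(r,k)$ such that for every $n \ge n_0$ the following holds. Let $\mathcal{H}$ be an intersecting $r$-uniform hypergraph on $n$ vertices with minimum positive co-degree $\delta_{r-1}^+(\mathcal{H}) \ge k$, and suppose $\mathcal{H}$ has the maximum number of hyperedges among all intersecting $r$-uniform $n$-vertex hypergraphs with minimum positive co-degree at least $k$. Then $\mathcal{H}$ is a $k$-kernel system.
   Context: A hypergraph is intersecting if every two of its hyperedges share at least one vertex. For a non-empty $r$-uniform hypergraph $\mathcal{H}$, the minimum positive co-degree $\delta_{r-1}^+(\mathcal{H})$ is the largest integer $k$ such that every $(r-1)$-set of vertices that is contained in at least one hyperedge of $\mathcal{H}$ is contained in at least $k$ distinct hyperedges of $\mathcal{H}$; for the empty hypergraph it is defined to be $0$. Given integers $r \ge k \ge 1$, an $r$-uniform $k$-kernel system on vertex set $V$ is a hypergraph whose hyperedge set is $\{E \in \binom{V}{r} : |E \cap X| \ge k\}$ for some distinguished set $X \subseteq V$ with $|X| = 2k-1$ (the kernel). *)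

From mathcomp Require Import all_boot.
Set Implicit Arguments. Unset Strict Implicit. Unset Printing Implicit Defensive.

Definition uniform (n r : nat) (H : {set {set 'I_n}}) : bool :=
  [forall E in H, #|E| == r].

Definition intersecting (n : nat) (H : {set {set 'I_n}}) : bool :=
  [forall E in H, forall F in H, E :&: F != set0].

Definition codeg (n : nat) (H : {set {set 'I_n}}) (S : {set 'I_n}) : nat :=
  #|[set E in H | S \subset E]|.

(* The seed #|H| of the min is harmless since codeg <= #|H|. *)
Definition min_pos_codeg (n r : nat) (H : {set {set 'I_n}}) : nat :=
  if H == set0 then 0
  else \big[minn/#|H|]_(S : {set 'I_n} | (#|S| == r.-1) && (0 < codeg H S))
          codeg H S.

Definition kernel_system (n r k : nat) (H : {set {set 'I_n}}) : Prop :=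
  exists X : {set 'I_n}, #|X| = (2 * k).-1 /\
    H = [set E : {set 'I_n} | (#|E| == r) && (k <= #|E :&: X|)].

(* The core is an extremal fact about k-uniform families ([full_kernel]): an
   intersecting k-uniform family in which every (k-1)-subset of a member has
   co-degree >= k contains all k-subsets of a (2k-1)-set, spanned by two members
   meeting in one point and reached by exchanges.  For k = r it applies to H.
   For k < r it applies to the heavy k-covers: the k-sets meeting all edges
   number at most r^k by branching ([card_covering_family]); all but
   O(n^(r-k-1)) edges trace a k-cover on the union W of the covers, and a
   threshold gap selects the covers with large trace classes ([heavy_kernel]).
   Once all k-subsets of a (2k-1)-set X are covers, every edge has k points in
   X, so H lies in the kernel system of X; maximality gives equality. *)
From mathcomp Require Import all_boot zify.
Set Implicit Arguments. Unset Strict Implicit. Unset Printing Implicit Defensive.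

Lemma card_succ_superset (T : finType) (S F : {set T}) :
  S \subset F -> #|F| = #|S|.+1 -> exists2 v, v \notin S & F = v |: S.
Proof.
move=> sSF cF.
have /eqP/cards1P[v ev] : #|F :\: S| = 1 by rewrite cardsD (setIidPr sSF) cF subSnn.
have : v \in F :\: S by rewrite ev set11.
rewrite inE => /andP[vS vF]; exists v => //.
apply/setP=> y; rewrite !inE.
case: (boolP (y \in S)) => yS; first by rewrite orbT (subsetP sSF).
rewrite orbF; have : (y \in F :\: S) = (y == v) by rewrite ev inE.
by rewrite inE yS.
Qed.

Section OnePointExtensions.
Variables (T : finType) (S Z : {set T}) (FF : {set {set T}}).
Hypothesis FF_ext : forall F, F \in FF -> S \subset F /\ #|F| = #|S|.+1.
Hypothesis FF_new : forall v, v \notin S -> v |: S \in FF -> v \in Z.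

Lemma extensions_sub : FF \subset (fun v => v |: S) @: Z.
Proof.
apply/subsetP=> F FF_F; have [sSF cF] := FF_ext FF_F.
have [v vS eF] := card_succ_superset sSF cF.
by apply/imsetP; exists v => //; apply: FF_new; rewrite -?eF.
Qed.

Lemma card_extensions : #|FF| <= #|Z|.
Proof. exact: leq_trans (subset_leq_card extensions_sub) (leq_imset_card _ _). Qed.

Lemma extensions_full : #|Z| <= #|FF| -> forall z, z \in Z -> z |: S \in FF.
Proof.
move=> cZ z zZ.
have -> : FF = (fun v => v |: S) @: Z.
  apply/eqP; rewrite eqEcard extensions_sub /=.
  exact: leq_trans (leq_imset_card _ _) cZ.
exact: imset_f.
Qed.

End OnePointExtensions.

Lemma card_bigcup_le (I T : finType) (P : pred I) (F : I -> {set T}) :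
  #|\bigcup_(i | P i) F i| <= \sum_(i | P i) #|F i|.
Proof.
elim/big_rec2: _ => [|i A m Pi le]; first by rewrite cards0.
by rewrite (leq_trans (leq_card_setU _ _)) // leq_add2l.
Qed.

Lemma bigmin_le (I : finType) (P : pred I) (F : I -> nat) x i :
  P i -> \big[minn/x]_(j | P j) F j <= F i.
Proof.
move=> Pi; have : i \in index_enum I by rewrite mem_index_enum.
elim: (index_enum I) => // a s IH; rewrite inE big_cons.
case/orP=> [/eqP<-|/IH h]; first by rewrite Pi geq_minl.
by case: (P a) => //; apply: leq_trans (geq_minr _ _) h.
Qed.

Lemma subset_of_card (T : finType) (A : {set T}) m :
  m <= #|A| -> exists2 D : {set T}, D \subset A & #|D| = m.
Proof.
case/card_geqP=> s [us ss sA]; exists [set x in s].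
  by apply/subsetP=> x; rewrite inE; apply: sA.
by rewrite cardsE (card_uniqP us).
Qed.

Lemma meets_all_ksubsets (T : finType) (X F : {set T}) k :
  (2 * k).-1 <= #|X| ->
  (forall D : {set T}, D \subset X -> #|D| = k -> D :&: F != set0) ->
  k <= #|F :&: X|.
Proof.
move=> cX hD; rewrite leqNgt; apply/negP=> lt.
have cI : #|X :&: F| <= #|X| by apply/subset_leq_card/subsetIl.
have : k <= #|X :\: F| by rewrite cardsD setIC; move: cX lt cI; rewrite setIC; lia.
case/subset_of_card=> D sD cD.
have /set0Pn[y] := hD D (subset_trans sD (subsetDl _ _)) cD.
by rewrite inE => /andP[/(subsetP sD)]; rewrite inE => /andP[/negbTE->].
Qed.

Definition star (T : finType) (H : {set {set T}}) (S : {set T}) :=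
  [set E in H | S \subset E].

Lemma in_star (T : finType) (H : {set {set T}}) (S E : {set T}) :
  (E \in star H S) = (E \in H) && (S \subset E).
Proof. by rewrite inE. Qed.

(* Every (|E|-1)-subset of a member E of H lies in at least k members of H;
   for uniform H this says that the minimum positive co-degree is >= k. *)
Definition codeg_at_least (T : finType) (k : nat) (H : {set {set T}}) :=
  forall E, E \in H -> forall x, x \in E -> k <= #|star H (E :\ x)|.

Section FullKernel.
Variables (T : finType) (k : nat) (AA : {set {set T}}).
Hypothesis AA_unif : forall A, A \in AA -> #|A| = k.
Hypothesis AA_int : forall A B, A \in AA -> B \in AA -> A :&: B != set0.
Hypothesis AA_codeg : codeg_at_least k AA.

(* If P and Q meet exactly in z, then z may be replaced in P by any point of
   Q: the k extensions of P \ z in AA must each use a point of Q. *)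
Lemma exchange (P Q : {set T}) z q : P \in AA -> Q \in AA -> P :&: Q = [set z] -> q \in Q ->
  q |: (P :\ z) \in AA.
Proof.
move=> PA QA ePQ qQ.
have zP : z \in P by have := set11 z; rewrite -ePQ inE => /andP[].
set S := P :\ z.
have cS : #|P| = #|S|.+1 by rewrite (cardsD1 z P) zP.
suff : q |: S \in star AA S by rewrite in_star => /andP[].
apply: (@extensions_full _ S Q) => //.
- move=> F; rewrite in_star => /andP[FA sF]; split => //.
  by rewrite (AA_unif FA) -cS (AA_unif PA).
- move=> v vS; rewrite in_star => /andP[vA _].
  have /set0Pn[y] := AA_int vA QA.
  rewrite !inE => /andP[/orP[/eqP->|/andP[yz yP]] yQ] //.
  have : y \in P :&: Q by rewrite inE yP yQ.
  by rewrite ePQ inE (negbTE yz).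
by rewrite (AA_unif QA); apply: AA_codeg.
Qed.

(* Two members with the smallest intersection meet in a single point: if they
   shared x and y, the co-degree of A \ x would exceed |B \ (A \ x)| < k. *)
Lemma two_meeting_in_a_point : AA != set0 ->
  exists A B y, [/\ A \in AA, B \in AA & A :&: B = [set y]].
Proof.
case/set0Pn=> A0 A0A.
have p0 : (A0, A0) \in setX AA AA by rewrite inE /= A0A.
case: (arg_minnP (fun p : {set T} * {set T} => #|p.1 :&: p.2|) p0).
case=> A B ABin hmin.
have /setXP[/= AA_A AA_B] : (A, B) \in setX AA AA := ABin.
have minAB C D : C \in AA -> D \in AA -> #|A :&: B| <= #|C :&: D|.
  by move=> CA DA; apply: (hmin (C, D)); apply/setXP.
have : 0 < #|A :&: B| by rewrite card_gt0; apply: AA_int.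
rewrite leq_eqVlt => /orP[/eqP/esym/eqP/cards1P[y ey]|]; first by exists A, B, y.
case/card_gt1P=> x [y [xAB yAB xy]]; exfalso.
move: (xAB) (yAB); rewrite !inE => /andP[xA xB] /andP[yA yB].
set S := A :\ x.
have cS : #|A| = #|S|.+1 by rewrite (cardsD1 x A) xA.
have ext_in_B : #|star AA S| <= #|B :\: S|.
  apply: (@card_extensions _ S).
    move=> F; rewrite in_star => /andP[FA sF]; split => //.
    by rewrite (AA_unif FA) -cS (AA_unif AA_A).
  move=> v vS; rewrite in_star => /andP[vA _].
  rewrite inE vS /=; apply/negPn/negP => vB.
  have sub : (v |: S) :&: B \subset S :&: B.
    apply/subsetP=> w; rewrite !inE => /andP[/orP[/eqP->|->] wB] //.
    by rewrite (negbTE vB) in wB.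
  have eAB : #|A :&: B| = #|S :&: B|.+1.
    rewrite (cardsD1 x (A :&: B)) xAB; congr (_.+1); apply: eq_card => w.
    by rewrite !inE andbA.
  by have := leq_trans (minAB _ _ vA AA_B) (subset_leq_card sub); rewrite eAB ltnn.
have small : #|B :\: S| < #|B|.
  apply: proper_card; rewrite properE subsetDl /=.
  apply/subsetPn; exists y => //; rewrite !inE yB andbT negbK yA andbT.
  by apply: contraNneq xy => ->.
move: small; rewrite (AA_unif AA_B) ltnNge.
by rewrite (leq_trans (AA_codeg AA_A xA) ext_in_B).
Qed.

Definition pivot (Y P : {set T}) z :=
  [&& P \in AA, z \in P, P \subset Y & z |: (Y :\: P) \in AA].

Lemma meet_complement (Y P : {set T}) z : z \in P -> P :&: (z |: (Y :\: P)) = [set z].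
Proof.
move=> zP; apply/setP=> w; rewrite !inE.
by case: (boolP (w == z)) => [/eqP->|_]; rewrite ?zP //; case: (w \in P).
Qed.

Lemma pivot_any_point (Y P : {set T}) z p : pivot Y P z -> p \in P -> pivot Y P p.
Proof.
move=> /and4P[PA zP sPY QA] pP; apply/and4P; split => //.
have eQP : (z |: (Y :\: P)) :&: P = [set z] by rewrite setIC meet_complement.
have := exchange QA PA eQP pP.
suff -> : (z |: (Y :\: P)) :\ z = Y :\: P by [].
apply/setP=> w; rewrite !inE.
by case: (boolP (w == z)) => [/eqP->|]; rewrite ?zP ?andbF.
Qed.

Lemma pivot_swap (Y P : {set T}) z q : pivot Y P z -> q \in Y :\: P -> pivot Y (q |: (P :\ z)) q.
Proof.
move=> /and4P[PA zP sPY QA] qYP.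
have qQ : q \in z |: (Y :\: P) by rewrite inE qYP orbT.
have P'A := exchange PA QA (meet_complement Y zP) qQ.
move: qYP; rewrite inE => /andP[qP qY].
have zY : z \in Y by apply: (subsetP sPY).
apply/and4P; split; rewrite ?setU11 //.
  apply/subsetP=> w; rewrite !inE => /orP[/eqP->//|/andP[_ wP]].
  exact: (subsetP sPY).
suff -> : q |: (Y :\: (q |: P :\ z)) = z |: (Y :\: P) by [].
apply/setP=> w; rewrite !inE.
case: (boolP (w == q)) => [/eqP->|wq]; first by rewrite qY (negbTE qP) orbT.
case: (boolP (w == z)) => [/eqP->|wz] /=; first by rewrite ?zY ?zP.
by case: (w \in P); case: (w \in Y).
Qed.

(* From a pivot, repeated swaps reach every k-subset D of Y: each swap removes
   one point of P \ D and adds one point of D \ P. *)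
Lemma pivot_reach (Y P D : {set T}) z : pivot Y P z -> D \subset Y -> #|D| = k -> D \in AA.
Proof.
move=> pPz sDY cD; move eM : #|D :\: P| => m.
elim: m P z pPz eM => [|m IH] P z pPz cDP; have /and4P[PA zP sPY _] := pPz.
  move/eqP: cDP; rewrite cards_eq0 setD_eq0 => sDP.
  suff -> : D = P by [].
  by apply/eqP; rewrite eqEcard sDP cD (AA_unif PA) leqnn.
have /set0Pn[q qDP] : D :\: P != set0 by rewrite -card_gt0 cDP.
have : 0 < #|P :\: D|.
  move: cDP; rewrite !cardsD (AA_unif PA) cD setIC; lia.
case/card_gt0P=> p; rewrite inE => /andP[pD pP].
move: (qDP); rewrite inE => /andP[qP qD].
have qYP : q \in Y :\: P by rewrite inE qP (subsetP sDY).
apply: (IH _ _ (pivot_swap (pivot_any_point pPz pP) qYP)).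
have -> : D :\: (q |: (P :\ p)) = (D :\: P) :\ q.
  apply/setP=> w; rewrite !inE.
  case: (boolP (w == q)) => //= wq.
  by case: (boolP (w == p)) => [/eqP->|] /=; rewrite ?(negbTE pD) ?andbF.
by move: cDP; rewrite (cardsD1 q (D :\: P)) qDP add1n => [[]].
Qed.

(* Main extremal fact: AA contains every k-subset of a (2k-1)-set, namely the
   union of two members meeting in one point. *)
Lemma full_kernel : AA != set0 -> exists2 Y : {set T}, #|Y| = (2 * k).-1 &
  forall D : {set T}, D \subset Y -> #|D| = k -> D \in AA.
Proof.
case/two_meeting_in_a_point=> [A [B [y [AA_A AA_B eAB]]]].
have yA : y \in A by have := set11 y; rewrite -eAB inE => /andP[].
have yB : y \in B by have := set11 y; rewrite -eAB inE => /andP[].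
exists (A :|: B).
  rewrite cardsU (AA_unif AA_A) (AA_unif AA_B) eAB cards1; lia.
move=> D sDY cD; apply: (@pivot_reach (A :|: B) A D y) => //.
apply/and4P; split; rewrite ?subsetUl //.
suff -> : y |: ((A :|: B) :\: A) = B by [].
apply/setP=> w; rewrite !inE.
case: (boolP (w == y)) => [/eqP->|wy] /=; first by rewrite yB.
case: (boolP (w \in A)) => wA; case: (boolP (w \in B)) => wB //=.
have : w \in A :&: B by rewrite inE wA wB.
by rewrite eAB inE (negbTE wy).
Qed.

End FullKernel.

(* Members of GG all meeting F: each member containing S also contains some
   x |: S with x in F. *)
Lemma star_branch (T : finType) (GG : {set {set T}}) (S F : {set T}) :
  (forall G, G \in GG -> G :&: F != set0) ->
  #|star GG S| <= \sum_(x in F) #|star GG (x |: S)|.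
Proof.
move=> GF; apply: leq_trans (card_bigcup_le _ _).
apply: subset_leq_card; apply/subsetP=> G; rewrite in_star => /andP[GG_G sSG].
have /set0Pn[x] := GF G GG_G; rewrite inE => /andP[xG xF].
apply/bigcupP; exists x => //.
by rewrite in_star GG_G subUset sub1set xG.
Qed.

Section Covers.
Variables (T : finType) (r k : nat) (H : {set {set T}}).
Hypothesis H_unif : forall E, E \in H -> #|E| = r.
Hypothesis H_codeg : codeg_at_least k H.
Hypothesis H_ne : H != set0.

(* Every cover (a set meeting all edges) has at least k vertices: for an edge
   E meeting the cover X least, E \ x extends only by vertices of X. *)
Lemma cover_card_ge (X : {set T}) : (forall F, F \in H -> X :&: F != set0) ->
  k <= #|X|.
Proof.
move=> hX; have /set0Pn[E0 E0H] := H_ne.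
case: (arg_minnP (fun E : {set T} => #|E :&: X|) E0H) => E EH hmin.
have /set0Pn[x] := hX E EH; rewrite inE => /andP[xX xE].
set S := E :\ x.
have cS : #|E| = #|S|.+1 by rewrite (cardsD1 x E) xE.
apply: leq_trans (H_codeg EH xE) _; apply: (@card_extensions _ S).
  move=> F; rewrite in_star => /andP[FH sF]; split => //.
  by rewrite (H_unif FH) -cS (H_unif EH).
move=> v vS; rewrite in_star => /andP[vH _]; apply/negPn/negP => vX.
have sub : (v |: S) :&: X \subset S :&: X.
  apply/subsetP=> w; rewrite !inE => /andP[/orP[/eqP->|->] wX] //.
  by rewrite (negbTE vX) in wX.
have eEX : #|E :&: X| = #|S :&: X|.+1.
  rewrite (cardsD1 x (E :&: X)) inE xE xX; congr (_.+1); apply: eq_card => w.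
  by rewrite !inE andbA.
by have := leq_trans (hmin _ vH) (subset_leq_card sub); rewrite eEX ltnn.
Qed.

(* Branching: a family GG of sets meeting every edge, in which each k-set
   lies in at most B members, has at most r^j * B members through any set of
   size k - j (a set of size < k is no cover, so some edge avoids it). *)
Lemma card_star_branching (GG : {set {set T}}) B :
  (forall G F, G \in GG -> F \in H -> G :&: F != set0) ->
  (forall S : {set T}, #|S| = k -> #|star GG S| <= B) ->
  forall j (S : {set T}), #|S| + j = k -> #|star GG S| <= r ^ j * B.
Proof.
move=> GGH hB; elim=> [|j IH] S cS.
  by rewrite expn0 mul1n; apply: hB; rewrite -cS addn0.
have : ~~ [forall F in H, S :&: F != set0].
  apply/negP=> /forall_inP /cover_card_ge.
  by rewrite -cS addnS ltnNge leq_addr.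
case/forall_inPn=> F FH; rewrite negbK => /eqP dSF.
apply: (leq_trans (star_branch S (fun G GG_G => GGH G F GG_G FH))).
apply: (@leq_trans (\sum_(x in F) r ^ j * B)).
  apply: leq_sum => x xF; apply: IH; rewrite cardsU1.
  have -> : x \notin S.
    apply/negP=> xS; have : x \in S :&: F by rewrite inE xS xF.
    by rewrite dSF inE.
  by rewrite add1n addSn -addnS.
by rewrite sum_nat_const (H_unif FH) expnS mulnA.
Qed.

Lemma card_covering_family (GG : {set {set T}}) B :
  (forall G F, G \in GG -> F \in H -> G :&: F != set0) ->
  (forall S : {set T}, #|S| = k -> #|star GG S| <= B) -> #|GG| <= r ^ k * B.
Proof.
move=> GGH hB; have := card_star_branching GGH hB (j := k) (S := set0).
rewrite cards0 add0n => /(_ erefl).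
suff -> : star GG set0 = GG by [].
by apply/setP=> G; rewrite in_star sub0set andbT.
Qed.

End Covers.

Lemma card_rsets_containing (T : finType) (S : {set T}) r : #|S| <= r ->
  #|[set E : {set T} | (#|E| == r) && (S \subset E)]| = 'C(#|T| - #|S|, r - #|S|).
Proof.
move=> Sr.
have -> : [set E : {set T} | (#|E| == r) && (S \subset E)] =
  (fun D => D :|: S) @: [set D : {set T} | D \subset ~: S & #|D| == r - #|S|].
  apply/setP=> E; rewrite inE; apply/andP/imsetP.
    case=> /eqP cE sSE; exists (E :\: S).
      by rewrite inE subDset setUCr subsetT /= cardsD (setIidPr sSE) cE.
    by rewrite -{1}(setID E S) (setIidPr sSE) setUC.
  case=> D; rewrite inE => /andP[sD /eqP cD] ->; split; last exact: subsetUr.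
  rewrite cardsU cD.
  suff -> : D :&: S = set0 by rewrite cards0 subn0 subnK.
  by apply/setP=> y; rewrite !inE; apply/negP=> /andP[/(subsetP sD)]; rewrite inE => /negP.
rewrite card_in_imset; first by rewrite cards_draws cardsCs setCK.
move=> D1 D2; rewrite !inE => /andP[s1 _] /andP[s2 _] e.
have undo (D : {set T}) : D \subset ~: S -> (D :|: S) :\: S = D.
  by move=> sD; rewrite setDUl setDv setU0; apply/setDidPl; rewrite disjoints_subset.
by rewrite -(undo _ s1) e undo.
Qed.

Definition kernel_family n r k (X : {set 'I_n}) :=
  [set E : {set 'I_n} | (#|E| == r) && (k <= #|E :&: X|)].

Lemma codeg_from_extensions n (K : {set {set 'I_n}}) (S V : {set 'I_n}) :
  V \subset ~: S -> (forall v, v \in V -> v |: S \in K) -> #|V| <= codeg K S.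
Proof.
move=> sV hV; rewrite /codeg.
rewrite -(@card_in_imset _ _ (fun v => v |: S)); last first.
  move=> v1 v2 v1V v2V e.
  have : v1 \in v2 |: S by rewrite -e setU11.
  rewrite !inE => /orP[/eqP//|v1S].
  by have := subsetP sV v1 v1V; rewrite inE v1S.
apply: subset_leq_card; apply/subsetP=> E /imsetP[v vV ->].
by rewrite inE hV // subsetUr.
Qed.

Section KernelSystem.
Variables (n r k : nat) (X : {set 'I_n}).
Hypotheses (k_gt0 : 0 < k) (k_le_r : k <= r) (card_X : #|X| = (2 * k).-1).
Let K := kernel_family r k X.

(* Two sets with k points each in the (2k-1)-set X meet inside X. *)
Lemma kernel_intersecting : intersecting K.
Proof.
apply/forall_inP=> E; rewrite inE => /andP[_ kE]; apply/forall_inP=> F.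
rewrite inE => /andP[_ kF].
have : (E :&: X) :&: (F :&: X) != set0.
  rewrite -card_gt0.
  have := cardsU (E :&: X) (F :&: X).
  have : #|(E :&: X) :|: (F :&: X)| <= #|X|.
    by apply: subset_leq_card; rewrite subUset !subsetIr.
  move: kE kF; rewrite card_X; lia.
by apply: contraNneq => eEF; rewrite setIACA eEF set0I.
Qed.

(* K contains all r-sets through a fixed k-subset of X. *)
Lemma card_kernel_ge : 'C(n - k, r - k) <= #|K|.
Proof.
have [A0 sA0 cA0] : exists2 A0 : {set 'I_n}, A0 \subset X & #|A0| = k.
  by apply: subset_of_card; rewrite card_X; lia.
have := @card_rsets_containing _ A0 r; rewrite cA0 card_ord => <- //.
apply: subset_leq_card; apply/subsetP=> E; rewrite !inE => /andP[-> sE] /=.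
by rewrite -cA0; apply: subset_leq_card; rewrite subsetI sE.
Qed.

(* An (r-1)-set S inside an edge of K has co-degree >= k: if |S :&: X| >= k
   all n - r + 1 extensions work; otherwise |S :&: X| = k - 1 and the k
   extensions by points of X \ S work. *)
Lemma kernel_codeg (S E : {set 'I_n}) : r + k <= n.+1 ->
  E \in K -> S \subset E -> #|S| = r.-1 -> k <= codeg K S.
Proof.
move=> rkn; rewrite inE => /andP[/eqP cE kE] sSE cS.
have r_gt0 : 0 < r by apply: leq_trans k_le_r.
have cE' : #|E| = #|S|.+1 by rewrite cE cS prednK.
have [v0 v0S eE] := card_succ_superset sSE cE'.
have cvS v : v \notin S -> #|v |: S| = r by move=> vS; rewrite cardsU1 vS cS add1n prednK.
case: (leqP k #|S :&: X|) => hSX.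
  have ext : #|~: S| <= codeg K S.
    apply: codeg_from_extensions => // v; rewrite inE => vS; rewrite inE cvS // eqxx /=.
    by apply: leq_trans hSX _; apply/subset_leq_card/setSI/subsetUr.
  by apply: leq_trans ext; rewrite cardsCs setCK card_ord cS; lia.
have : #|E :&: X| <= #|S :&: X|.+1.
  rewrite eE setIUl; apply: leq_trans (leq_card_setU _ _) _.
  rewrite -add1n leq_add2r -(cards1 v0).
  by apply/subset_leq_card/subsetIl.
move=> eEX; have cSX : #|S :&: X| = k.-1 by move: eEX kE hSX; lia.
have ext : #|X :\: S| <= codeg K S.
  apply: codeg_from_extensions; first by apply/subsetP=> v; rewrite !inE => /andP[].
  move=> v; rewrite inE => /andP[vS vX]; rewrite inE cvS // eqxx /=.
  rewrite setIUl cardsU.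
  have -> : [set v] :&: X = [set v].
    by apply/setP=> w; rewrite !inE; case: (boolP (w == v)) => // /eqP->.
  have -> : [set v] :&: (S :&: X) = set0.
    by apply/setP=> w; rewrite !inE; case: (boolP (w == v)) => // /eqP->; rewrite (negbTE vS).
  by rewrite cards1 cards0 subn0 cSX; lia.
by apply: leq_trans ext; rewrite cardsD card_X setIC cSX; lia.
Qed.

Lemma kernel_admissible : r + k <= n.+1 ->
  [/\ uniform r K, intersecting K & k <= min_pos_codeg r K].
Proof.
move=> rkn; split.
- by apply/forall_inP=> E; rewrite inE => /andP[].
- exact: kernel_intersecting.
have K_ne : K != set0.
  by rewrite -card_gt0; apply: leq_trans card_kernel_ge; rewrite bin_gt0; lia.
have [E0 E0K] := set0Pn _ K_ne.
rewrite /min_pos_codeg (negbTE K_ne).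
apply: (big_ind (fun m => k <= m)).
- move: (E0K); rewrite inE => /andP[/eqP cE _].
  have /card_gt0P[x xE] : 0 < #|E0| by rewrite cE; apply: leq_trans k_le_r.
  have cS : #|E0 :\ x| = r.-1 by rewrite -cE (cardsD1 x E0) xE.
  apply: leq_trans (kernel_codeg rkn E0K (subsetDl _ _) cS) _.
  by apply: subset_leq_card; apply/subsetP=> F; rewrite inE => /andP[].
- by move=> a b ka kb; rewrite leq_min ka kb.
move=> S /andP[/eqP cS]; rewrite card_gt0 => /set0Pn[E].
by rewrite inE => /andP[EK sSE]; apply: kernel_codeg rkn EK sSE cS.
Qed.

End KernelSystem.

Lemma threshold_gap (I : finType) (CC : {set I}) (t : I -> nat) (Tf : nat -> nat) :
  (forall j, Tf j <= Tf j.+1) ->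
  exists2 i, i <= #|CC| & forall A, A \in CC -> ~~ ((Tf i < t A) && (t A <= Tf i.+1)).
Proof.
move=> mono.
have mono0 j : Tf 0 <= Tf j by elim: j => // j IH; apply: leq_trans IH (mono j).
case: (boolP [exists i : 'I_(#|CC|.+1),
               [forall A in CC, ~~ ((Tf i < t A) && (t A <= Tf i.+1))]]).
  by case/existsP=> i /forall_inP gapi; exists i => //; rewrite -ltnS ltn_ord.
move/existsPn=> no_gap; exfalso.
pose within m := [set A in CC | (Tf 0 < t A) && (t A <= Tf m)].
have grow m : m <= #|CC|.+1 -> m <= #|within m|.
  elim: m => // m IH lt.
  have /forall_inPn[A AinC] := no_gap (Ordinal lt).
  rewrite negbK /= => /andP[a1 a2].
  apply: leq_trans (_ : #|A |: within m| <= _).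
    by rewrite cardsU1 inE AinC /= (leqNgt _ (Tf m)) a1 andbF add1n ltnS IH // ltnW.
  apply: subset_leq_card; apply/subsetP=> B; rewrite !inE => /orP[/eqP->|].
    by rewrite AinC a2 (leq_ltn_trans (mono0 m) a1).
  by case/andP=> -> /andP[-> bm]; apply: leq_trans bm (mono m).
have : #|within #|CC|.+1| <= #|CC| by apply/subset_leq_card/subsetP=> B; rewrite inE => /andP[].
by rewrite leqNgt grow.
Qed.

Lemma trace_exchange (T : finType) (E W A : {set T}) x v :
  E :&: W = A -> (v |: (E :\ x)) :&: W = if v \in W then v |: (A :\ x) else A :\ x.
Proof.
move=> eA; have mA w : (w \in A) = (w \in E) && (w \in W) by rewrite -eA inE.
case: (boolP (v \in W)) => vW; apply/setP => w; rewrite !inE mA;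
case: (boolP (w == v)) => [/eqP->|wv] /=; rewrite ?vW ?andbF ?andbT ?andbA //.
by rewrite (negbTE vW) !andbF.
Qed.

Lemma exchange_back (T : finType) (E : {set T}) x v :
  x \in E -> v \notin E :\ x -> v != x -> x |: ((v |: (E :\ x)) :\ v) = E.
Proof.
move=> xE vE vx; apply/setP=> w; rewrite !inE.
case: (boolP (w == x)) => [/eqP->|wx] /=; first by rewrite xE.
case: (boolP (w == v)) => [/eqP->|wv] //=.
by move: vE; rewrite !inE (negbTE vx) /= => /negbTE.
Qed.

Definition trace_class (T : finType) (H : {set {set T}}) (W A : {set T}) :=
  [set E in H | E :&: W == A].
Definition stray (T : finType) (H CC : {set {set T}}) (W : {set T}) :=
  [set E in H | E :&: W \notin CC].
Definition heavy (T : finType) (H CC : {set {set T}}) (W : {set T}) (Th : nat) :=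
  [set A in CC | Th < #|trace_class H W A|].

Section HeavyClasses.
Variables (T : finType) (r k : nat) (H CC : {set {set T}}) (W : {set T}) (Th : nat).
Hypothesis H_unif : forall E, E \in H -> #|E| = r.
Hypothesis H_codeg : codeg_at_least k H.
Hypothesis CC_sub : forall A, A \in CC -> #|A| = k /\ A \subset W.

Let Heavy := heavy H CC W Th.

(* An edge E of the class of A is x-defective if some neighbour
   v |: (E :\ x) in H leaves the class structure: v is a new vertex whose
   exchange does not land in a heavy class. *)
Definition defective (A : {set T}) x :=
  [set E in trace_class H W A | [exists v, [&& v \notin E :\ x, v |: (E :\ x) \in H &
     ~~ ((v == x) || ((v \in W) && (v |: (A :\ x) \in Heavy)))]]].

(* Each defective edge is a reverse exchange of a stray edge, or of an edge in
   a light class: few possibilities. *)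
Lemma card_defective A x : A \in CC -> x \in A ->
  #|defective A x| <= r * #|stray H CC W| + #|W| * Th.
Proof.
move=> AinC xA; have [cA sAW] := CC_sub AinC.
have AxnC : A :\ x \notin CC.
  apply/negP=> /CC_sub[cAx _]; move: cAx cA.
  by rewrite (cardsD1 x A) xA add1n => ->; lia.
pose U1 := \bigcup_(F in stray H CC W) [set x |: (F :\ v) | v in F].
pose U2 := \bigcup_(v in W) (if (v |: (A :\ x) \in CC) && (v |: (A :\ x) \notin Heavy)
   then [set x |: (F :\ v) | F in trace_class H W (v |: (A :\ x))] else set0).
have cU1 : #|U1| <= r * #|stray H CC W|.
  apply: leq_trans (card_bigcup_le _ _) _; rewrite mulnC -sum_nat_const.
  apply: leq_sum => F; rewrite inE => /andP[FH _]; rewrite -(H_unif FH).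
  exact: leq_imset_card.
have cU2 : #|U2| <= #|W| * Th.
  apply: leq_trans (card_bigcup_le _ _) _; rewrite -sum_nat_const.
  apply: leq_sum => v _; case: ifP => [/andP[vAC light]|]; last by rewrite cards0.
  by apply: leq_trans (leq_imset_card _ _) _; move: light; rewrite inE vAC -leqNgt.
apply: leq_trans (leq_add cU1 cU2); apply: leq_trans (leq_card_setU U1 U2).
apply/subset_leq_card/subsetP=> E.
rewrite !inE => /andP[/andP[EH /eqP eA] /existsP[v /and3P[vE FH]]].
rewrite negb_or => /andP[vx not_heavy].
have xE : x \in E by move: xA; rewrite -eA inE => /andP[].
have eE := exchange_back xE vE vx.
set F := v |: (E :\ x) in FH eE.
have tr := trace_exchange x v eA; rewrite -/F in tr.
case: (boolP (F :&: W \in CC)) => FWC; last first.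
  apply/orP; left; apply/bigcupP; exists F; first by rewrite inE FH FWC.
  by apply/imsetP; exists v; rewrite // setU11.
case: (boolP (v \in W)) => vW; last by move: FWC; rewrite tr (negbTE vW) (negbTE AxnC).
move: FWC not_heavy; rewrite tr vW /= => FWC not_heavy.
apply/orP; right; apply/bigcupP; exists v => //; rewrite FWC not_heavy /=.
by apply/imsetP; exists F => //; rewrite inE FH tr vW eqxx.
Qed.

(* A non-defective edge E of a heavy class A: the k neighbours of E :\ x have
   distinct traces, all heavy classes containing A :\ x. *)
Lemma heavy_codeg_from_edge A x E : A \in Heavy -> x \in A ->
  E \in trace_class H W A -> E \notin defective A x -> k <= #|star Heavy (A :\ x)|.
Proof.
move=> AH xA EA EnD; move: (EA); rewrite inE => /andP[EH /eqP eA].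
have xE : x \in E by move: xA; rewrite -eA inE => /andP[].
have cEx : #|E| = #|E :\ x|.+1 by rewrite (cardsD1 x E) xE.
have neighbour F : F \in star H (E :\ x) ->
    [/\ F :&: W \in Heavy, A :\ x \subset F :&: W & F = (E :\ x) :|: (F :&: W)].
  rewrite in_star => /andP[FH sF].
  have [v vE eF] := card_succ_superset sF (etrans (H_unif FH) (etrans (esym (H_unif EH)) cEx)).
  have good : (v == x) || ((v \in W) && (v |: (A :\ x) \in Heavy)).
    apply/negPn/negP=> bad; move/negP: EnD; apply; rewrite inE EA /=.
    by apply/existsP; exists v; rewrite vE -eF FH bad.
  have vW : v \in W by case/orP: good => [/eqP->|/andP[]//]; apply: (subsetP (CC_sub _).2 _ xA); move: AH; rewrite inE => /andP[].
  have vA : v |: (A :\ x) \in Heavy by case/orP: good => [/eqP->|/andP[]//]; rewrite setD1K.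
  have tr := trace_exchange x v eA; rewrite -eF vW in tr.
  rewrite tr vA; split; rewrite ?subsetUr //.
  rewrite -tr eF; apply/setP=> w; rewrite !inE.
  case: (boolP (w == v)) => [/eqP->|wv]; rewrite ?vW /= ?orbT //.
  by case: (_ && _).
apply: leq_trans (H_codeg EH xE) _.
rewrite -(@card_in_imset _ _ (fun F => F :&: W)); last first.
  by move=> F1 F2 /neighbour[_ _ e1] /neighbour[_ _ e2] e; rewrite e1 e2 e.
apply/subset_leq_card/subsetP=> B /imsetP[F FE ->].
by have [h1 h2 _] := neighbour F FE; rewrite in_star h1 h2.
Qed.

Lemma heavy_codeg A x : A \in CC -> x \in A ->
  r * #|stray H CC W| + #|W| * Th < #|trace_class H W A| ->
  k <= #|star Heavy (A :\ x)|.
Proof.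
move=> AinC xA big.
have AH : A \in Heavy.
  rewrite inE AinC /=; apply: leq_ltn_trans big; apply: leq_trans (leq_addl _ _).
  by apply: leq_pmull; apply/card_gt0P; exists x; apply: (subsetP (CC_sub AinC).2).
have : ~~ (trace_class H W A \subset defective A x).
  apply/negP=> /subset_leq_card sub.
  by have := leq_ltn_trans (leq_trans sub (card_defective AinC xA)) big; rewrite ltnn.
case/subsetPn=> E EA EnD; exact: heavy_codeg_from_edge AH xA EA EnD.
Qed.

End HeavyClasses.

Definition kcovers (T : finType) (k : nat) (H : {set {set T}}) :=
  [set A : {set T} | (#|A| == k) && [forall F in H, A :&: F != set0]].
Definition uncovered (T : finType) (H CC : {set {set T}}) :=
  [set E in H | [forall A in CC, ~~ (A \subset E)]].

Definition thresholds (a b j : nat) := iter j (fun t => a + b * t + t) 0.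

Lemma thresholds_succ a b j : thresholds a b j <= thresholds a b j.+1.
Proof. by rewrite /thresholds iterS leq_addl. Qed.

Lemma thresholds_monotone a b i j : i <= j -> thresholds a b i <= thresholds a b j.
Proof.
move/subnKC<-; elim: (j - i) => [|d IH]; first by rewrite addn0.
by rewrite addnS; apply: leq_trans IH (thresholds_succ _ _ _).
Qed.

Lemma thresholds_bound a b j : thresholds a b j <= a * (b + 2) ^ j.
Proof.
elim: j => // j IH; rewrite /thresholds iterS -/(thresholds a b j) expnS.
have p : 0 < (b + 2) ^ j by rewrite expn_gt0 addn2.
move: IH p; set t := thresholds a b j; set P := (b + 2) ^ j; nia.
Qed.

(* The constant D(r, k) with |H| <= D(r, k) * C(n-k-1, r-k-1) when no trace
   class is heavy. *)
Definition stab_const r k :=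
  (r ^ k * r + r ^ k * (k * r ^ k)) * (1 + r ^ k * r * (k * r ^ k + 2) ^ (r ^ k)).

Lemma exp_mono a b m p : a <= b -> m <= p -> (a + 2) ^ m <= (b + 2) ^ p.
Proof.
move=> ab mp; apply: (@leq_trans ((b + 2) ^ m)).
  by case: m {mp} => [//|m]; rewrite leq_exp2r // leq_add2r.
by apply: leq_pexp2l; rewrite ?addn2.
Qed.

Lemma light_count_bound r k M Hc R C w t :
  Hc <= R + C * t -> t <= r * R * (w + 2) ^ C ->
  R <= r ^ k * (r * M) + C * (w * M) -> C <= r ^ k -> w <= k * C ->
  Hc <= stab_const r k * M.
Proof.
move=> HR tR RM Cc wC.
set c := r ^ k in Cc RM; set w' := k * c.
have ww : w <= w' by apply: leq_trans wC _; rewrite leq_mul2l Cc orbT.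
have e1 : (w + 2) ^ C <= (w' + 2) ^ c by apply: exp_mono.
have R2 : R <= (c * r + c * w') * M.
  apply: leq_trans RM _; rewrite mulnDl mulnA leq_add2l -mulnA.
  by apply: leq_mul => //; apply: leq_mul.
have H2 : Hc <= R * (1 + c * r * (w' + 2) ^ c).
  apply: leq_trans HR _; rewrite mulnDr muln1 leq_add2l.
  have := leq_trans (leq_mul (leqnn C) tR) (leq_mul Cc (leq_mul (leqnn (r * R)) e1)).
  set P := (w' + 2) ^ c; set Q := (w + 2) ^ C; clear; nia.
apply: leq_trans H2 _; rewrite /stab_const -/c -/w'.
by apply: leq_trans (leq_mul R2 (leqnn _)) _; rewrite mulnAC.
Qed.

(* C(n-k, r-k) = (r-k)/(n-k) C(n-k-1, r-k-1) grows linearly in n compared with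
   C(n-k-1, r-k-1), so it cannot stay below D * C(n-k-1, r-k-1). *)
Lemma binomial_growth n r k D : k < r -> r <= n ->
  'C(n - k, r - k) <= D * 'C(n - k.+1, r - k.+1) -> n <= k + (r - k) * D.
Proof.
move=> kr rn big; set M := 'C(n - k.+1, r - k.+1) in big.
have iden : (n - k) * M = (r - k) * 'C(n - k, r - k).
  by rewrite /M !subnS mul_bin_diag prednK // subn_gt0.
have N0 : 0 < 'C(n - k, r - k) by rewrite bin_gt0 leq_sub2r.
have M0 : 0 < M.
  rewrite lt0n; apply/negP=> /eqP M0; move: iden; rewrite M0 muln0 => /esym/eqP.
  by rewrite muln_eq0 subn_eq0 leqNgt kr /= eqn0Ngt N0.
have : (n - k) * M <= (r - k) * D * M by rewrite iden -mulnA leq_mul2l big orbT.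
by rewrite leq_mul2r eqn0Ngt M0 /=; lia.
Qed.

Section Stability.
Variables (n r k : nat) (H : {set {set 'I_n}}).
Hypothesis k_lt_r : k < r.
Hypothesis H_unif : forall E, E \in H -> #|E| = r.
Hypothesis H_int : forall E F, E \in H -> F \in H -> E :&: F != set0.
Hypothesis H_codeg : codeg_at_least k H.
Hypothesis H_ne : H != set0.

Let CC := kcovers k H.
Let W := \bigcup_(A in CC) A.
Let M := 'C(n - k.+1, r - k.+1).

Lemma kcovers_meet A F : A \in CC -> F \in H -> A :&: F != set0.
Proof. by rewrite inE => /andP[_ /forall_inP cov] FH; apply: cov. Qed.

Lemma kcovers_card A : A \in CC -> #|A| = k.
Proof. by rewrite inE => /andP[/eqP]. Qed.

Lemma kcovers_sub A : A \in CC -> #|A| = k /\ A \subset W.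
Proof. by move=> AinC; split; [apply: kcovers_card | apply: bigcup_sup]. Qed.

(* At most r^k k-covers: each k-set is contained in at most one of them. *)
Lemma card_kcovers : #|CC| <= r ^ k.
Proof.
rewrite -[r ^ k]muln1; apply: (card_covering_family H_unif H_codeg H_ne kcovers_meet).
move=> S cS; rewrite -(cards1 S); apply/subset_leq_card/subsetP=> G.
rewrite in_star => /andP[GC sSG]; rewrite inE eq_sym eqEcard sSG.
by rewrite (kcovers_card GC) cS leqnn.
Qed.

Lemma card_cover_union : #|W| <= k * #|CC|.
Proof.
apply: leq_trans (card_bigcup_le _ _) _; rewrite mulnC -sum_nat_const.
by apply: leq_sum => A /kcovers_card ->.
Qed.

Lemma card_star_succ (S : {set 'I_n}) : #|S| = k.+1 -> #|star H S| <= M.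
Proof.
move=> cS; have e := @card_rsets_containing _ S r; rewrite card_ord cS in e.
rewrite /M -e //; apply/subset_leq_card/subsetP=> E; rewrite in_star !inE => /andP[EH ->].
by rewrite (H_unif EH) eqxx.
Qed.

(* Edges containing no k-cover: a k-set that is no cover is avoided by some
   edge F, so branching over F gives the bound r * M for each k-set. *)
Lemma card_uncovered : #|uncovered H CC| <= r ^ k * (r * M).
Proof.
have meet G F : G \in uncovered H CC -> F \in H -> G :&: F != set0.
  by rewrite inE => /andP[GH _]; apply: H_int.
apply: (card_covering_family H_unif H_codeg H_ne meet) => S cS.
case: (boolP [forall F in H, S :&: F != set0]) => cov.
  have SC : S \in CC by rewrite inE cS eqxx cov.
  suff -> : star (uncovered H CC) S = set0 by rewrite cards0.
  apply/setP=> G; rewrite in_star !inE.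
  by apply/negP=> /andP[/andP[_ /forall_inP /(_ S SC)]] /negP.
case/forall_inPn: cov => F FH; rewrite negbK => /eqP dSF.
apply: leq_trans (star_branch S (fun G GG => meet G F GG FH)) _.
rewrite -(H_unif FH) -sum_nat_const; apply: leq_sum => x xF.
have xS : x \notin S.
  apply/negP=> xS; have : x \in S :&: F by rewrite inE xS xF.
  by rewrite dSF inE.
have cxS : #|x |: S| = k.+1 by rewrite cardsU1 xS cS.
apply: leq_trans (card_star_succ cxS).
by apply/subset_leq_card/subsetP=> G; rewrite !in_star inE => /andP[/andP[-> _] ->].
Qed.

(* An edge whose trace on W is not a k-cover either contains no k-cover or
   contains a k-cover A and a further point w of W. *)
Lemma card_stray : #|stray H CC W| <= r ^ k * (r * M) + #|CC| * (#|W| * M).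
Proof.
have sub : stray H CC W \subset uncovered H CC :|:
    \bigcup_(A in CC) \bigcup_(w in W :\: A) star H (w |: A).
  apply/subsetP=> E; rewrite inE => /andP[EH EWn].
  case: (boolP (E \in uncovered H CC)) => EB; first by rewrite inE EB.
  move: EB; rewrite inE EH /= => /forall_inPn[A AinC]; rewrite negbK => sAE.
  have sAEW : A \subset E :&: W by rewrite subsetI sAE bigcup_sup.
  have /subsetPn[w] : ~~ (E :&: W \subset A).
    apply: contra EWn => sEA.
    by have -> : E :&: W = A by apply/eqP; rewrite eqEsubset sEA sAEW.
  rewrite inE => /andP[wE wW] wA.
  rewrite inE; apply/orP; right; apply/bigcupP; exists A => //.
  apply/bigcupP; exists w; first by rewrite inE wA wW.
  by rewrite in_star EH subUset sub1set wE sAE.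
apply: leq_trans (subset_leq_card sub) _.
apply: leq_trans (leq_card_setU _ _) _; apply: leq_add; first exact: card_uncovered.
apply: leq_trans (card_bigcup_le _ _) _.
rewrite -sum_nat_const; apply: leq_sum => A AinC.
apply: leq_trans (card_bigcup_le _ _) _.
apply: (@leq_trans (\sum_(w in W :\: A) M)).
  apply: leq_sum => w; rewrite inE => /andP[wA _].
  by apply: card_star_succ; rewrite cardsU1 wA kcovers_card.
rewrite sum_nat_const leq_mul2r; apply/orP; right.
by apply/subset_leq_card/subsetDl.
Qed.

Lemma card_by_classes :
  #|H| <= #|stray H CC W| + \sum_(A in CC) #|trace_class H W A|.
Proof.
have sub : H \subset stray H CC W :|: \bigcup_(A in CC) trace_class H W A.
  apply/subsetP=> E EH; rewrite inE.
  case: (boolP (E :&: W \in CC)) => EC; last by rewrite inE EH EC.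
  by apply/orP; right; apply/bigcupP; exists (E :&: W); rewrite // inE EH eqxx.
apply: leq_trans (subset_leq_card sub) _.
by apply: leq_trans (leq_card_setU _ _) _; rewrite leq_add2l card_bigcup_le.
Qed.

Let Tf := thresholds (r * #|stray H CC W|) #|W|.

(* If |H| >= C(n-k, r-k) and n is large, some trace class exceeds the top
   threshold t_|CC|: otherwise |H| <= D(r,k) * C(n-k-1, r-k-1). *)
Lemma some_heavy_class : r <= n -> k + (r - k) * stab_const r k < n ->
  'C(n - k, r - k) <= #|H| -> exists2 A, A \in CC & Tf #|CC| < #|trace_class H W A|.
Proof.
move=> rn n_big HN; apply/exists_inP; apply: contraTT n_big.
move/exists_inPn => light; rewrite -leqNgt; apply: binomial_growth k_lt_r rn _.
apply: leq_trans HN _; apply: (@light_count_bound r k M _ #|stray H CC W| #|CC| #|W| (Tf #|CC|)).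
- apply: leq_trans card_by_classes _; rewrite leq_add2l -sum_nat_const.
  by apply: leq_sum => A /light; rewrite -leqNgt.
- exact: thresholds_bound.
- exact: card_stray.
- exact: card_kcovers.
- exact: card_cover_union.
Qed.

(* A heavy class is non-empty, so it meets every k-cover: an edge E of the
   class meets a k-cover B inside W, that is, inside the trace A of E. *)
Lemma heavy_meets_kcovers Th A B : A \in heavy H CC W Th -> B \in CC ->
  A :&: B != set0.
Proof.
rewrite inE => /andP[_ heavyA] BinC.
have /card_gt0P[E] : 0 < #|trace_class H W A| by apply: leq_ltn_trans heavyA.
rewrite inE => /andP[EH /eqP eA].
have /set0Pn[y] := kcovers_meet BinC EH; rewrite inE => /andP[yB yE].
apply/set0Pn; exists y; rewrite inE yB andbT -eA inE yE.
exact: (subsetP (kcovers_sub BinC).2).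
Qed.

(* The gap argument picks a threshold t_i with
   no class size in (t_i, t_(i+1)]; the heavy classes above t_i then satisfy
   the hypotheses of [full_kernel]. *)
Lemma heavy_kernel : r <= n -> k + (r - k) * stab_const r k < n ->
  'C(n - k, r - k) <= #|H| -> exists2 X : {set 'I_n}, #|X| = (2 * k).-1 &
    forall D : {set 'I_n}, D \subset X -> #|D| = k -> D \in CC.
Proof.
move=> rn n_big HN; have [A0 A0C A0big] := some_heavy_class rn n_big HN.
have [i iC window_free] := threshold_gap CC (fun A => #|trace_class H W A|)
  (thresholds_succ (r * #|stray H CC W|) #|W|).
pose Heavy := heavy H CC W (Tf i).
have in_CC A : A \in Heavy -> A \in CC by rewrite inE => /andP[].
have bigA A : A \in Heavy -> r * #|stray H CC W| + #|W| * Tf i < #|trace_class H W A|.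
  rewrite inE => /andP[AinC heavyA]; move: (window_free A AinC).
  rewrite heavyA andTb -ltnNge; apply: leq_ltn_trans.
  by rewrite /Tf /thresholds iterS leq_addr.
have Heavy_unif A : A \in Heavy -> #|A| = k by move/in_CC/kcovers_card.
have Heavy_int A B : A \in Heavy -> B \in Heavy -> A :&: B != set0.
  by move=> AH /in_CC; apply: heavy_meets_kcovers AH.
have Heavy_codeg : codeg_at_least k Heavy.
  move=> A AH x xA.
  exact: (heavy_codeg H_unif H_codeg kcovers_sub (in_CC A AH) xA (bigA A AH)).
have Heavy_ne : Heavy != set0.
  apply/set0Pn; exists A0; rewrite inE A0C /=.
  by apply: leq_ltn_trans A0big; apply: thresholds_monotone.
have [X cX allX] := full_kernel Heavy_unif Heavy_int Heavy_codeg Heavy_ne.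
by exists X => // D sDX cD; apply/in_CC/allX.
Qed.

End Stability.

(* Once all k-subsets of a (2k-1)-set X are k-covers, every edge has at least
   k vertices in X, so H lies inside the kernel system of X; maximality then
   forces equality. *)
Lemma kernel_system_of_covers n r k (H : {set {set 'I_n}}) (X : {set 'I_n}) :
  (forall E, E \in H -> #|E| = r) -> #|X| = (2 * k).-1 ->
  (forall D : {set 'I_n}, D \subset X -> #|D| = k -> D \in kcovers k H) ->
  #|kernel_family r k X| <= #|H| -> kernel_system r k H.
Proof.
move=> H_unif cX covX hmax; exists X; split => //.
apply/eqP; rewrite eqEcard hmax andbT.
apply/subsetP=> E EH; rewrite inE (H_unif E EH) eqxx /=.
apply: meets_all_ksubsets; first by rewrite cX.
by move=> D sDX cD; move: (covX D sDX cD); rewrite inE => /andP[_ /forall_inP]; apply.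
Qed.

Lemma card_ge_kernel_bound n r k (H : {set {set 'I_n}}) :
  0 < k -> k <= r -> (2 * k).-1 <= n ->
  (forall X : {set 'I_n}, #|X| = (2 * k).-1 -> #|kernel_family r k X| <= #|H|) ->
  'C(n - k, r - k) <= #|H|.
Proof.
move=> k_gt0 k_le_r kn hmax.
have [X _ cX] : exists2 X : {set 'I_n}, X \subset [set: 'I_n] & #|X| = (2 * k).-1.
  by apply: subset_of_card; rewrite cardsT card_ord.
exact: leq_trans (card_kernel_ge k_gt0 k_le_r cX) (hmax X cX).
Qed.

(* For k = r the family H itself satisfies the hypotheses of [full_kernel];
   its members are r-covers since H is intersecting. *)
Lemma diagonal_kernel n r (H : {set {set 'I_n}}) :
  (forall E, E \in H -> #|E| = r) ->
  (forall E F, E \in H -> F \in H -> E :&: F != set0) ->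
  codeg_at_least r H -> H != set0 -> exists2 X : {set 'I_n}, #|X| = (2 * r).-1 &
    forall D : {set 'I_n}, D \subset X -> #|D| = r -> D \in kcovers r H.
Proof.
move=> H_unif H_int H_codeg H_ne.
have [X cX allX] := full_kernel H_unif H_int H_codeg H_ne.
exists X => // D sDX cD; rewrite inE cD eqxx /=.
by apply/forall_inP=> F; apply: H_int; apply: allX.
Qed.

Lemma codeg_from_min_pos n r k (H : {set {set 'I_n}}) :
  (forall E, E \in H -> #|E| = r) -> H != set0 -> k <= min_pos_codeg r H ->
  codeg_at_least k H.
Proof.
move=> H_unif H_ne kmin E EH x xE; apply: leq_trans kmin _.
rewrite /min_pos_codeg (negbTE H_ne).
apply: (bigmin_le (P := fun S : {set 'I_n} => (#|S| == r.-1) && (0 < codeg H S))).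
have cEx : #|E :\ x| = r.-1 by rewrite -(H_unif E EH) (cardsD1 x E) xE add1n.
apply/andP; split; first by rewrite cEx.
by rewrite card_gt0; apply/set0Pn; exists E; rewrite in_star EH subsetDl.
Qed.

Theorem theorem1 (r k : nat) :
  1 <= k -> k <= r ->
  exists n0 : nat, forall n : nat, n0 <= n ->
    forall H : {set {set 'I_n}},
      uniform r H -> intersecting H -> k <= min_pos_codeg r H ->
      (forall H' : {set {set 'I_n}},
          uniform r H' -> intersecting H' -> k <= min_pos_codeg r H' ->
          #|H'| <= #|H|) ->
      kernel_system r k H.
Proof.
move=> k_gt0 k_le_r; exists (r + 2 * k + (r - k) * stab_const r k + 1).
move=> n n_big H unifH intH kmin maxH.
have H_ne : H != set0.
  by apply: contraTneq kmin => ->; rewrite /min_pos_codeg eqxx -ltnNge.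
have H_unif E : E \in H -> #|E| = r.
  by move=> EH; move/forall_inP: unifH => /(_ E EH) /eqP.
have H_int E F : E \in H -> F \in H -> E :&: F != set0.
  by move=> EH FH; move/forall_inP: intH => /(_ E EH) /forall_inP; apply.
have H_codeg := codeg_from_min_pos H_unif H_ne kmin.
have hmax (X : {set 'I_n}) : #|X| = (2 * k).-1 -> #|kernel_family r k X| <= #|H|.
  move=> cX; have rkn : r + k <= n.+1 by lia.
  by have [] := kernel_admissible k_gt0 k_le_r cX rkn; apply: maxH.
have [X cX covX] : exists2 X : {set 'I_n}, #|X| = (2 * k).-1 &
    forall D : {set 'I_n}, D \subset X -> #|D| = k -> D \in kcovers k H.
  case: (ltnP k r) => [k_lt_r | r_le_k].
    apply: (heavy_kernel k_lt_r H_unif H_int H_codeg H_ne); try lia.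
    by apply: card_ge_kernel_bound hmax => //; lia.
  have ekr : k = r by apply/eqP; rewrite eqn_leq k_le_r r_le_k.
  by subst k; apply: diagonal_kernel.
exact: kernel_system_of_covers H_unif cX covX (hmax X cX).
Qed.
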